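(* Let $\mathcal{H}_A,\mathcal{H}_B$ be finite-dimensional Hilbert spaces and let $W_{AB}\in\mathcal{W}(\mathcal{H}_A\otimes\mathcal{H}_B)$ be a beyond quantum state. Then there exists a semiquantum game $\mathbb{G}_{sq}$ and a choice of local measurements $M_{AA^o}$, $N_{BB^o}$ such that the expected payoff obtained from $W_{AB}$ with these measurements is strictly negative, whereas for every density operator $\rho_{AB}\in\mathcal{D}(\mathcal{H}_A\otimes\mathcal{H}_B)$ and every choice of local measurements (POVMs on $\mathcal{H}_A\otimes\mathcal{H}_{A^o}$ and on $\mathcal{H}_B\otimes\mathcal{H}_{B^o}$ with outcome sets those of the game) the expected payoff is nonnegative. In short: $\mathcal{I}_{\mathbb{G}_{sq}}(W_{AB})<0$ while $\mathcal{I}_{\mathbb{G}_{sq}}(\rho_{AB})\ge 0$ for all $\rho_{AB}\in\mathcal{D}(\mathcal{H}_A\otimes\mathcal{H}_B)$.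
   Context: A POPT state on $\mathcal{H}_A\otimes\mathcal{H}_B$ is a Hermitian unit-trace operator $W$ with $\operatorname{Tr}[W(P\otimes Q)]\ge0$ for all positive semidefinite $P$ on $\mathcal{H}_A$, $Q$ on $\mathcal{H}_B$; the set of these is $\mathcal{W}(\mathcal{H}_A\otimes\mathcal{H}_B)$. $\mathcal{D}(\mathcal{H}_A\otimes\mathcal{H}_B)$ is the set of density operators. A beyond quantum state is an element of $\mathcal{W}\setminus\mathcal{D}$. A (bipartite) semiquantum game $\mathbb{G}_{sq}$ consists of finite-dimensional Hilbert spaces $\mathcal{H}_{A^o},\mathcal{H}_{B^o}$, finite families of pure states $\{\psi^s_{A^o}\}_{s\in\mathcal{S}_A}$ on $\mathcal{H}_{A^o}$ and $\{\psi^t_{B^o}\}_{t\in\mathcal{S}_B}$ on $\mathcal{H}_{B^o}$ (quantum inputs), finite output sets $\mathcal{O}_A,\mathcal{O}_B$, and a real payoff function $\beta:\mathcal{S}_A\times\mathcal{O}_A\times\mathcal{S}_B\times\mathcal{O}_B\to\mathbb{R}$. Given a (POPT or quantum) state $Z_{AB}$ and POVMs $M_{AA^o}=\{\pi^a_{AA^o}\}_{a\in\mathcal{O}_A}$ on $\mathcal{H}_A\otimes\mathcal{H}_{A^o}$ and $N_{BB^o}=\{\pi^b_{BB^o}\}_{b\in\mathcal{O}_B}$ on $\mathcal{H}_B\otimes\mathcal{H}_{B^o}$, the correlation is $p(a,b|\psi^s,\psi^t)=\operatorname{Tr}[(\pi^a_{AA^o}\otimes\pi^b_{BB^o})(\psi^s_{A^o}\otimes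 Z_{AB}\otimes\psi^t_{B^o})]$ (tensor factors reordered appropriately), and the expected payoff is $\mathcal{I}_{\mathbb{G}_{sq}}(Z_{AB})=\sum_{s,a,t,b}\beta(s,a,t,b)\,p(a,b|\psi^s,\psi^t)$. *)

(* Complex scalars: an arbitrary numClosedFieldType C
   (e.g. the complex numbers R[i]); finite-dimensional Hilbert spaces are C^d,
   operators are 'M[C]_d, tensor products are Kronecker products (tensmx). *)
From HB Require Import structures.
From mathcomp Require Import all_boot all_order all_algebra.
From mathcomp Require Import mxtens.
Set Implicit Arguments. Unset Strict Implicit. Unset Printing Implicit Defensive.
Import Order.TTheory GRing.Theory Num.Theory.
Local Open Scope ring_scope.

Section QDefs.
Variable C : numClosedFieldType.

Definition adjmx {m n : nat} (A : 'M[C]_(m, n)) : 'M[C]_(n, m) :=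
  map_mx Num.conj A^T.

Definition hermitian {n : nat} (A : 'M[C]_n) : Prop := adjmx A = A.

Definition psd {n : nat} (A : 'M[C]_n) : Prop :=
  hermitian A /\ forall v : 'cV[C]_n, 0 <= (adjmx v *m A *m v) 0 0.

Definition density {n : nat} (rho : 'M[C]_n) : Prop :=
  psd rho /\ \tr rho = 1.

Definition popt {dA dB : nat} (W : 'M[C]_(dA * dB)) : Prop :=
  hermitian W /\ \tr W = 1 /\
  forall (P : 'M[C]_dA) (Q : 'M[C]_dB), psd P -> psd Q ->
    0 <= \tr (W *m (P *t Q)).

Definition pure_state {n : nat} (psi : 'M[C]_n) : Prop :=
  exists v : 'cV[C]_n, adjmx v *m v = 1%:M /\ psi = v *m adjmx v.

Definition povm {n k : nat} (pi : 'I_k -> 'M[C]_n) : Prop :=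
  (forall a, psd (pi a)) /\ \sum_(a < k) pi a = 1%:M.

(* psi^s_{A^o} (x) Z_{AB} (x) psi^t_{B^o}, with tensor factors reordered to
   (A (x) A^o) (x) (B (x) B^o). *)
Definition joint_state {dA dB dAo dBo : nat} (psiA : 'M[C]_dAo)
  (Z : 'M[C]_(dA * dB)) (psiB : 'M[C]_dBo) : 'M[C]_((dA * dAo) * (dB * dBo)) :=
  \matrix_(r, c)
    let: (ik, jl) := mxtens_unindex r in
    let: (ik', jl') := mxtens_unindex c in
    let: (i, k) := mxtens_unindex ik in
    let: (j, l) := mxtens_unindex jl in
    let: (i', k') := mxtens_unindex ik' in
    let: (j', l') := mxtens_unindex jl' in
    psiA k k' * Z (mxtens_index (i, j)) (mxtens_index (i', j')) * psiB l l'.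

Definition corr {dA dB dAo dBo : nat} (piA : 'M[C]_(dA * dAo))
  (piB : 'M[C]_(dB * dBo)) (psiA : 'M[C]_dAo) (Z : 'M[C]_(dA * dB))
  (psiB : 'M[C]_dBo) : C :=
  \tr ((piA *t piB) *m joint_state psiA Z psiB).

Record sq_game := SqGame {
  dAo : nat; dBo : nat;
  nSA : nat; nSB : nat; nOA : nat; nOB : nat;
  in_A : 'I_nSA -> 'M[C]_dAo;
  in_B : 'I_nSB -> 'M[C]_dBo;
  beta : 'I_nSA -> 'I_nOA -> 'I_nSB -> 'I_nOB -> C }.

Definition valid_game (G : sq_game) : Prop :=
  (forall s, pure_state (@in_A G s)) /\ (forall t, pure_state (@in_B G t)) /\
  (forall s a t b, @beta G s a t b \is Num.real).

Definition payoff {dA dB : nat} (G : sq_game)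
  (M : 'I_(nOA G) -> 'M[C]_(dA * dAo G)) (N : 'I_(nOB G) -> 'M[C]_(dB * dBo G))
  (Z : 'M[C]_(dA * dB)) : C :=
  \sum_(s < nSA G) \sum_(a < nOA G) \sum_(t < nSB G) \sum_(b < nOB G)
    @beta G s a t b * corr (M a) (N b) (@in_A G s) Z (@in_B G t).

End QDefs.

Arguments payoff {C dA dB} G M N Z.
Arguments valid_game {C} G.

(* Since W is Hermitian but not positive, some vector x has x^H W x < 0;
   put Y = (x x^H)^T.  Polarization with the vectors e_i + i^p e_k writes every
   Hermitian operator on C^dA (x) C^dB as a real combination of products
   psi_s (x) psi_t of pure states.  Taking the psi_s, psi_t as quantum inputs
   and these coefficients as the payoff of the output pair (0, 0) turns the
   expected payoff into Tr[(M_0 (x) N_0) (Z (x) Y)], up to a reordering of the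
   tensor factors.  For a density operator Z this is the trace of a product of
   two positive operators, hence nonnegative.  For Z = W and M_0, N_0 the
   projectors onto maximally entangled vectors it equals
   Tr[W Y^T] / (dA dB) = x^H W x / (dA dB) < 0. *)
From Pilot Require Import Defs.
From HB Require Import structures.
From mathcomp Require Import all_boot all_order all_algebra.
From mathcomp Require Import mxtens spectral ring.
From Stdlib Require Import Classical.
Import Order.TTheory GRing.Theory Num.Theory.
Set Implicit Arguments. Unset Strict Implicit. Unset Printing Implicit Defensive.
Local Open Scope ring_scope.

Lemma sum_pair (R : nmodType) (I J : finType) (F : I * J -> R) :
  \sum_x F x = \sum_i \sum_j F (i, j).
Proof. by rewrite pair_bigA; apply: eq_bigr => -[]. Qed.

Lemma sum_mxtens (R : nmodType) m n (F : 'I_(m * n) -> R) :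
  \sum_r F r = \sum_i \sum_j F (mxtens_index (i, j)).
Proof.
rewrite pair_big /=; apply: reindex.
by exists (@mxtens_unindex m n) => [[i j]|r] _; rewrite ?mxtens_indexK ?mxtens_unindexK.
Qed.

Lemma sum_enum_val (R : nmodType) (T : finType) (F : T -> R) :
  \sum_(s < #|{: T}|) F (enum_val s) = \sum_x F x.
Proof.
rewrite [RHS](reindex (fun s : 'I_#|{: T}| => enum_val s)) //.
exact/onW_bij/enum_val_bij.
Qed.

Lemma sum_delta_mul (R : pzSemiRingType) n (a : 'I_n) (g : 'I_n -> R) :
  \sum_i (a == i)%:R * g i = g a.
Proof.
rewrite (bigD1 a) //= eqxx mul1r big1 ?addr0 // => i.
by rewrite eq_sym => /negbTE ->; rewrite mul0r.
Qed.

Section PositiveOperators.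
Variable C : numClosedFieldType.

Lemma adjmxM m n p (A : 'M[C]_(m, n)) (B : 'M[C]_(n, p)) :
  adjmx (A *m B) = adjmx B *m adjmx A.
Proof. by rewrite /adjmx trmx_mul map_mxM. Qed.

Lemma adjmxK m n (A : 'M[C]_(m, n)) : adjmx (adjmx A) = A.
Proof. by apply/matrixP => i j; rewrite !mxE conjCK. Qed.

Lemma adjmxZ m n (a : C) (A : 'M[C]_(m, n)) : adjmx (a *: A) = a^* *: adjmx A.
Proof. by apply/matrixP => i j; rewrite !mxE rmorphM. Qed.

Lemma adjmx_sum (I : finType) m n (A : I -> 'M[C]_(m, n)) :
  adjmx (\sum_i A i) = \sum_i adjmx (A i).
Proof.
apply/matrixP => r c; rewrite /adjmx !mxE !summxE rmorph_sum.
by apply: eq_bigr => i _; rewrite !mxE.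
Qed.

Lemma adjmx_tens m n p q (A : 'M[C]_(m, n)) (B : 'M[C]_(p, q)) :
  adjmx (A *t B) = adjmx A *t adjmx B.
Proof. by rewrite /adjmx trmx_tens map_mxT. Qed.

Lemma hermitian_form_real n (A : 'M[C]_n) (v : 'cV[C]_n) :
  Defs.hermitian A -> (adjmx v *m A *m v) 0 0 \is Num.real.
Proof.
move=> hA; apply/CrealP.
have -> : ((adjmx v *m A *m v) 0 0)^* = adjmx (adjmx v *m A *m v) 0 0 by rewrite !mxE.
by rewrite !adjmxM adjmxK hA mulmxA.
Qed.

Lemma not_psd_witness n (A : 'M[C]_n) : Defs.hermitian A -> ~ psd A ->
  exists v : 'cV[C]_n, (adjmx v *m A *m v) 0 0 < 0.
Proof.
move=> hA not_psdA.
have /not_all_ex_not[v v_neg] : ~ forall v : 'cV[C]_n, 0 <= (adjmx v *m A *m v) 0 0.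
  by move=> form_ge0; apply: not_psdA.
by exists v; rewrite real_ltNge ?hermitian_form_real //; apply/negP.
Qed.

Lemma mxtrace_eq1_dim_gt0 n (A : 'M[C]_n) : \tr A = 1 -> (0 < n)%N.
Proof.
by case: n A => [A|//]; rewrite /mxtrace big_ord0 => /eqP; rewrite eq_sym oner_eq0.
Qed.

Lemma psd_adjmx_mul m n (X : 'M[C]_(m, n)) : psd (adjmx X *m X).
Proof.
split=> [|v]; first by rewrite /Defs.hermitian adjmxM adjmxK.
rewrite mulmxA -adjmxM -mulmxA mxE; apply: sumr_ge0 => k _.
by rewrite !mxE mulrC mul_conjC_ge0.
Qed.

Lemma psd_conj m n (A : 'M[C]_m) (X : 'M[C]_(m, n)) :
  psd A -> psd (adjmx X *m A *m X).
Proof.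
case=> hA pA; split=> [|v]; first by rewrite /Defs.hermitian !adjmxM adjmxK hA mulmxA.
by rewrite !mulmxA -adjmxM -!mulmxA mulmxA; apply: pA.
Qed.

Lemma psd_proj n (P : 'M[C]_n) : Defs.hermitian P -> P *m P = P -> psd P.
Proof. by move=> hP idP; rewrite -idP -{1}hP; apply: psd_adjmx_mul. Qed.

Lemma psd_gram n (A : 'M[C]_n) :
  psd A -> exists m (G : 'M[C]_(m, n)), A = adjmx G *m G.
Proof.
case=> hA pA.
have /orthomx_spectralP : A \is normalmx.
  by apply/hermitian_normalmx/is_hermitianmxP; rewrite expr0 scale1r -[LHS]hA.
set P := spectralmx A; set d := spectral_diag A.
rewrite invmx_unitary ?spectral_unitarymx // => eA.
have PP : P *m adjmx P = 1%:M by apply/unitarymxP/spectral_unitarymx.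
have d_ge0 k : 0 <= d 0 k.
  have := pA (adjmx P *m delta_mx k (0 : 'I_1)).
  rewrite adjmxM adjmxK /adjmx trmx_delta map_delta_mx ?conjC0 ?conjC1 //.
  rewrite eA !mulmxA -(mulmxA _ P) PP mulmx1 -(mulmxA _ P) PP mulmx1.
  by rewrite -rowE -colE !mxE eqxx mulr1n.
set S := diag_mx (\row_k sqrtC (d 0 k)).
have SS : adjmx S *m S = diag_mx d.
  apply/matrixP => i j; rewrite mul_mx_diag !mxE eq_sym.
  case: eqP => [->|_]; last by rewrite !mulr0n conjC0 !mul0r.
  by rewrite !mulr1n geC0_conj ?sqrtC_ge0 // -expr2 sqrtCK.
by exists n, (S *m P); rewrite adjmxM -mulmxA [adjmx S *m _]mulmxA SS mulmxA.
Qed.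

Lemma psd_tens m n (A : 'M[C]_m) (B : 'M[C]_n) : psd A -> psd B -> psd (A *t B).
Proof.
move=> /psd_gram[p [G ->]] /psd_gram[q [H ->]].
by rewrite -tensmx_mul -adjmx_tens; apply: psd_adjmx_mul.
Qed.

Lemma psd_mxsub m n (f : 'I_n -> 'I_m) (A : 'M[C]_m) : psd A -> psd (mxsub f f A).
Proof.
have -> : mxsub f f A = adjmx (colsub f 1%:M) *m A *m colsub f 1%:M.
  apply/matrixP => i j; rewrite /adjmx !mxE (bigD1 (f j)) //= big1 => [|k /negbTE nk].
    rewrite !mxE eqxx mulr1 addr0 (bigD1 (f i)) //= big1 => [|k /negbTE nk].
      by rewrite !mxE eqxx conjC1 mul1r addr0.
    by rewrite !mxE nk conjC0 mul0r.
  by rewrite !mxE nk mulr0.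
exact: psd_conj.
Qed.

Lemma mxtrace_adjmx_mul_ge0 m n (X : 'M[C]_(m, n)) : 0 <= \tr (adjmx X *m X).
Proof.
apply: sumr_ge0 => i _; rewrite mxE; apply: sumr_ge0 => k _.
by rewrite /adjmx !mxE mulrC mul_conjC_ge0.
Qed.

Lemma psd_mxtrace_mul_ge0 n (A B : 'M[C]_n) : psd A -> psd B -> 0 <= \tr (A *m B).
Proof.
move=> /psd_gram[p [G ->]] /psd_gram[q [H ->]].
rewrite mulmxA mxtrace_mulC !mulmxA -mulmxA.
have -> : H *m adjmx G = adjmx (G *m adjmx H) by rewrite adjmxM adjmxK.
exact: mxtrace_adjmx_mul_ge0.
Qed.

Lemma povm_proj n (P : 'M[C]_n) : Defs.hermitian P -> P *m P = P ->
  povm (fun a : 'I_2 => if a == ord0 then P else 1%:M - P).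
Proof.
move=> hP idP; split; last by rewrite big_ord_recl big_ord1 /= addrC subrK.
move=> a; case: ifP => _; first exact: psd_proj.
apply: psd_proj; last by rewrite mulmxBl !mulmxBr !mul1mx mulmx1 idP subrr subr0.
by rewrite /Defs.hermitian /adjmx linearB /= map_mxB trmx1 map_mx1 -/(adjmx P) hP.
Qed.
End PositiveOperators.

Section JointOperator.
Variable C : numClosedFieldType.
Variables dA dB dAo dBo : nat.

Definition tens_shuffle (r : 'I_((dA * dAo) * (dB * dBo))) :
    'I_((dA * dB) * (dAo * dBo)) :=
  let: (ik, jl) := mxtens_unindex r in
  let: (i, k) := mxtens_unindex ik in
  let: (j, l) := mxtens_unindex jl in
  mxtens_index (mxtens_index (i, j), mxtens_index (k, l)).

(* [joint_state psiA Z psiB] with the product [psiA *t psiB] replaced by an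
   arbitrary operator [F] on A^o (x) B^o, so that it becomes linear in [F]. *)
Definition joint_op (Z : 'M[C]_(dA * dB)) (F : 'M[C]_(dAo * dBo)) :
    'M[C]_((dA * dAo) * (dB * dBo)) :=
  mxsub tens_shuffle tens_shuffle (Z *t F).

Fact joint_op_is_linear Z : linear (joint_op Z).
Proof. by move=> a F G; apply/matrixP => r c; rewrite !mxE mulrDr mulrCA. Qed.

HB.instance Definition _ Z :=
  GRing.isLinear.Build C _ _ _ (joint_op Z) (joint_op_is_linear Z).

Lemma joint_opE (Z : 'M[C]_(dA * dB)) (F : 'M[C]_(dAo * dBo)) i k j l i' k' j' l' :
  joint_op Z F (mxtens_index (mxtens_index (i, k), mxtens_index (j, l)))
               (mxtens_index (mxtens_index (i', k'), mxtens_index (j', l'))) =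
  Z (mxtens_index (i, j)) (mxtens_index (i', j')) *
  F (mxtens_index (k, l)) (mxtens_index (k', l')).
Proof. by rewrite !mxE /tens_shuffle !mxtens_indexK. Qed.

Lemma joint_stateE (psiA : 'M[C]_dAo) (Z : 'M[C]_(dA * dB)) (psiB : 'M[C]_dBo) :
  joint_state psiA Z psiB = joint_op Z (psiA *t psiB).
Proof.
apply/matrixP => r c; rewrite !mxE /tens_shuffle.
case: (mxtens_indexP r) => ik jl; case: (mxtens_indexP c) => ik' jl'.
case: (mxtens_indexP ik) => i k; case: (mxtens_indexP jl) => j l.
case: (mxtens_indexP ik') => i' k'; case: (mxtens_indexP jl') => j' l'.
by rewrite !mxtens_indexK /= mulrAC mulrC.
Qed.

Lemma psd_joint_op (Z : 'M[C]_(dA * dB)) (F : 'M[C]_(dAo * dBo)) :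
  psd Z -> psd F -> psd (joint_op Z F).
Proof. by move=> pZ pF; apply/psd_mxsub/psd_tens. Qed.
End JointOperator.

Section MaxEntangled.
Variable C : numClosedFieldType.

Definition max_ent n : 'cV[C]_(n * n) :=
  \col_r ((mxtens_unindex r).1 == (mxtens_unindex r).2)%:R.

Definition max_ent_proj n : 'M[C]_(n * n) :=
  n%:R^-1 *: (max_ent n *m adjmx (max_ent n)).

Lemma sum_max_ent n (g : 'I_(n * n) -> C) :
  \sum_r max_ent n r 0 * g r = \sum_i g (mxtens_index (i, i)).
Proof.
rewrite sum_mxtens; apply: eq_bigr => i _.
rewrite -(sum_delta_mul i (fun k => g (mxtens_index (i, k)))).
by apply: eq_bigr => k _; rewrite mxE mxtens_indexK.
Qed.

Lemma adjmx_max_ent_mul n : adjmx (max_ent n) *m max_ent n = n%:R%:M.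
Proof.
have real_entry r : adjmx (max_ent n) 0 r = max_ent n r 0.
  by rewrite /adjmx !mxE conjC_nat.
apply/matrixP => i j; rewrite !ord1 [LHS]mxE.
under eq_bigr => r _ do rewrite real_entry.
rewrite sum_max_ent [RHS]mxE -[n in RHS]card_ord -sumr_const.
by apply: eq_bigr => k _; rewrite mxE mxtens_indexK eqxx.
Qed.

Lemma max_ent_proj_hermitian n : Defs.hermitian (max_ent_proj n).
Proof.
apply/matrixP => i j; rewrite /adjmx !mxE !big_ord1 !mxE !rmorphM /= fmorphV /=.
by rewrite !conjC_nat [X in _ * X]mulrC.
Qed.

Lemma max_ent_proj_idem n :
  (0 < n)%N -> max_ent_proj n *m max_ent_proj n = max_ent_proj n.
Proof.
move=> n_gt0; rewrite /max_ent_proj -scalemxAl -scalemxAr scalerA mulmxA.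
rewrite -(mulmxA (max_ent n)) adjmx_max_ent_mul mul_mx_scalar -scalemxAl scalerA.
by rewrite -mulrA mulVf ?mulr1 // pnatr_eq0 -lt0n.
Qed.

Lemma sum_max_ent_tens dA dB (g : 'I_((dA * dA) * (dB * dB)) -> C) :
  \sum_r (max_ent dA *t max_ent dB) r 0 * g r =
  \sum_i \sum_j g (mxtens_index (mxtens_index (i, i), mxtens_index (j, j))).
Proof.
have entry a b : (max_ent dA *t max_ent dB) (mxtens_index (a, b)) 0 =
    max_ent dA a 0 * max_ent dB b 0 by rewrite !mxE mxtens_indexK.
rewrite sum_mxtens.
under eq_bigr => a _ do under eq_bigr => b _ do rewrite entry -mulrA.
under eq_bigr => a _ do rewrite -mulr_sumr sum_max_ent.
by rewrite sum_max_ent.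
Qed.

Lemma mxtrace_max_ent_joint_op dA dB (Z F : 'M[C]_(dA * dB)) :
  \tr ((max_ent_proj dA *t max_ent_proj dB) *m joint_op Z F) =
  (dA%:R * dB%:R)^-1 * \tr (Z *m F^T).
Proof.
set w := max_ent dA *t max_ent dB.
have -> : max_ent_proj dA *t max_ent_proj dB = (dA%:R * dB%:R)^-1 *: (w *m w^T).
  by apply/matrixP => r c; rewrite /adjmx !mxE !big_ord1 !mxE !conjC_nat invfM; ring.
rewrite -scalemxAl mxtraceZ; congr (_ * _).
rewrite -mulmxA mxtrace_mulC /mxtrace big_ord1 mxE.
under eq_bigr => c _ do rewrite mxE mulr_suml.
under eq_bigr => c _ do under eq_bigr => r _ do rewrite [w^T _ _]mxE mulrC.
under eq_bigr => c _ do rewrite -mulr_sumr sum_max_ent_tens.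
rewrite sum_max_ent_tens; transitivity (\sum_v \sum_u Z u v * F u v).
  rewrite [RHS]sum_mxtens; apply: eq_bigr => i _; apply: eq_bigr => j _.
  rewrite sum_mxtens; apply: eq_bigr => i' _; apply: eq_bigr => j' _.
  by rewrite joint_opE.
rewrite exchange_big; apply: eq_bigr => u _; rewrite mxE.
by apply: eq_bigr => v _; rewrite mxE.
Qed.
End MaxEntangled.

Arguments max_ent {C} n.
Arguments max_ent_proj {C} n.

Section Polarization.
Variable C : numClosedFieldType.
Variable d : nat.
Implicit Types (u : 'cV[C]_d) (i k : 'I_d).

Definition sqnorm u : C := (adjmx u *m u) 0 0.

(* The basis vector [delta_mx i0 0] is only a placeholder for [u = 0], which
   does occur: [polar_vec i i 2 = 0]. *)
Definition normalize u i0 : 'cV[C]_d :=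
  if u == 0 then delta_mx i0 0 else (sqrtC (sqnorm u))^-1 *: u.

Lemma sqnorm_ge0 u : 0 <= sqnorm u.
Proof.
rewrite /sqnorm mxE; apply: sumr_ge0 => x _.
by rewrite /adjmx !mxE mulrC mul_conjC_ge0.
Qed.

Lemma sqnorm_eq0 u : (sqnorm u == 0) = (u == 0).
Proof.
apply/idP/eqP => [/eqP|->]; last by rewrite /sqnorm mulmx0 mxE.
have term_ge0 y : true -> 0 <= adjmx u 0 y * u y 0.
  by rewrite /adjmx !mxE mulrC mul_conjC_ge0.
rewrite /sqnorm mxE => /(psumr_eq0P term_ge0) u0.
apply/matrixP => x j; rewrite ord1 !mxE; apply/eqP.
by rewrite -mul_conjC_eq0 mulrC; apply/eqP; have := u0 x isT; rewrite /adjmx !mxE.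
Qed.

Lemma normalize_unit u i0 : adjmx (normalize u i0) *m normalize u i0 = 1%:M.
Proof.
rewrite /normalize; case: eqP => [_|/eqP u0].
  rewrite /adjmx trmx_delta map_delta_mx ?conjC0 ?conjC1 // mul_delta_mx.
  by apply/matrixP => a b; rewrite !ord1 !mxE.
have s0 : sqrtC (sqnorm u) != 0 by rewrite sqrtC_eq0 sqnorm_eq0.
rewrite adjmxZ geC0_conj ?invr_ge0 ?sqrtC_ge0 ?sqnorm_ge0 //.
rewrite -scalemxAl -scalemxAr scalerA -invfM -expr2 sqrtCK.
by rewrite [adjmx u *m u]mx11_scalar -/(sqnorm u) scale_scalar_mx mulVf ?sqnorm_eq0.
Qed.

Lemma outer_normalize u i0 :
  u *m adjmx u = sqnorm u *: (normalize u i0 *m adjmx (normalize u i0)).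
Proof.
rewrite /normalize; case: eqP => [->|/eqP u0].
  by rewrite /sqnorm !(mul0mx, mulmx0) mxE scale0r.
have s0 : sqrtC (sqnorm u) != 0 by rewrite sqrtC_eq0 sqnorm_eq0.
rewrite adjmxZ geC0_conj ?invr_ge0 ?sqrtC_ge0 ?sqnorm_ge0 //.
rewrite -scalemxAl -scalemxAr !scalerA -mulrA -invfM -expr2 sqrtCK.
by rewrite mulfV ?scale1r ?sqnorm_eq0.
Qed.

Definition polar_vec i k (p : 'I_4) : 'cV[C]_d :=
  delta_mx i 0 + 'i ^+ p *: delta_mx k 0.

Definition polar_state (x : 'I_d * 'I_d * 'I_4) : 'M[C]_d :=
  let: (i, k, p) := x in
  let v := normalize (polar_vec i k p) i in v *m adjmx v.

Definition polar_coef (x : 'I_d * 'I_d * 'I_4) : C :=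
  let: (i, k, p) := x in 'i ^+ p / 4%:R * sqnorm (polar_vec i k p).

Lemma pure_state_polar x : pure_state (polar_state x).
Proof.
by case: x => [[i k] p]; exists (normalize (polar_vec i k p) i); rewrite normalize_unit.
Qed.

Lemma polar_state_hermitian x : Defs.hermitian (polar_state x).
Proof. by case: x => [[i k] p]; rewrite /Defs.hermitian adjmxM adjmxK. Qed.

Lemma polarization i k a a' :
  \sum_(p < 4) polar_coef (i, k, p) * polar_state (i, k, p) a a' =
  (a == i)%:R * (a' == k)%:R.
Proof.
have term p : polar_coef (i, k, p) * polar_state (i, k, p) a a' =
    'i ^+ p / 4%:R * (polar_vec i k p *m adjmx (polar_vec i k p)) a a'.
  by rewrite (outer_normalize _ i) [in RHS]mxE mulrA.
under eq_bigr do rewrite term mxE big_ord1 /adjmx !mxE !eqxx !andbT.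
rewrite !big_ord_recr big_ord0 /=.
rewrite !rmorphD !rmorphM /= !conjC_nat !rmorphXn /= conjCi.
have h4 : (4%:R : C) != 0 by rewrite pnatr_eq0.
by field: (sqrCi C).
Qed.

Lemma sum_polar (G : 'I_d -> 'I_d -> C) a a' :
  \sum_x polar_coef x * polar_state x a a' * G x.1.1 x.1.2 = G a a'.
Proof.
rewrite !sum_pair /=.
under eq_bigr => i _ do under eq_bigr => k _ do
  rewrite -mulr_suml polarization -mulrA.
under eq_bigr => i _ do rewrite -mulr_sumr sum_delta_mul.
exact: sum_delta_mul.
Qed.
End Polarization.

Arguments polar_state {C d}.
Arguments polar_coef {C d}.

Section ProductDecomposition.
Variable C : numClosedFieldType.
Variables dA dB : nat.
Implicit Types (x : 'I_dA * 'I_dA * 'I_4) (y : 'I_dB * 'I_dB * 'I_4).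

Definition product_coef (Y : 'M[C]_(dA * dB)) x y : C :=
  polar_coef x * polar_coef y *
  Y (mxtens_index (x.1.1, y.1.1)) (mxtens_index (x.1.2, y.1.2)).

Lemma product_decomposition (Y : 'M[C]_(dA * dB)) :
  Y = \sum_x \sum_y product_coef Y x y *: (polar_state x *t polar_state y).
Proof.
apply/matrixP => u v.
case: (mxtens_indexP u) => a b; case: (mxtens_indexP v) => a' b'.
have reorder x y :
    product_coef Y x y * (polar_state x a a' * polar_state y b b') =
    polar_coef y * polar_state y b b' * (polar_coef x * polar_state x a a' *
      Y (mxtens_index (x.1.1, y.1.1)) (mxtens_index (x.1.2, y.1.2))).
  by rewrite /product_coef; ring.
rewrite summxE; under eq_bigr => x _ do rewrite summxE.
under eq_bigr => x _ do under eq_bigr => y _ do rewrite mxE tensmxE reorder.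
under eq_bigr => x _ do rewrite (sum_polar (fun j l => polar_coef x *
  polar_state x a a' * Y (mxtens_index (x.1.1, j)) (mxtens_index (x.1.2, l)))).
by rewrite (sum_polar (fun i k => Y (mxtens_index (i, b)) (mxtens_index (k, b')))).
Qed.

Lemma hermitian_product_decomposition (Y : 'M[C]_(dA * dB)) : Defs.hermitian Y ->
  Y = \sum_x \sum_y 'Re (product_coef Y x y) *: (polar_state x *t polar_state y).
Proof.
move=> hY; have dec := product_decomposition Y.
have dec_conj :
    Y = \sum_x \sum_y (product_coef Y x y)^* *: (polar_state x *t polar_state y).
  rewrite -{1}hY {1}dec adjmx_sum; apply: eq_bigr => x _; rewrite adjmx_sum.
  by apply: eq_bigr => y _; rewrite adjmxZ adjmx_tens !polar_state_hermitian.
transitivity (2^-1 *: (Y + Y)).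
  by rewrite -mulr2n -scaler_nat scalerA mulVf ?scale1r // pnatr_eq0.
rewrite [X in X + _]dec [X in _ + X]dec_conj -big_split scaler_sumr.
apply: eq_bigr => x _; rewrite -big_split scaler_sumr; apply: eq_bigr => y _.
by rewrite /= -scalerDl scalerA ReE mulrC.
Qed.
End ProductDecomposition.

Section WitnessGame.
Variable C : numClosedFieldType.
Variables dA dB : nat.

Definition witness_game (Y : 'M[C]_(dA * dB)) : sq_game C :=
  @SqGame C dA dB #|{: 'I_dA * 'I_dA * 'I_4}| #|{: 'I_dB * 'I_dB * 'I_4}| 2 2
    (fun s => polar_state (enum_val s)) (fun t => polar_state (enum_val t))
    (fun s a t b => if (a == ord0) && (b == ord0)
                    then 'Re (product_coef Y (enum_val s) (enum_val t)) else 0).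

Lemma witness_game_valid (Y : 'M[C]_(dA * dB)) : valid_game (witness_game Y).
Proof.
split=> [s|]; first exact: pure_state_polar.
split=> [t|s a t b]; first exact: pure_state_polar.
by rewrite /=; case: ifP => _; [apply: Creal_Re | apply: real0].
Qed.

Lemma payoff_witness_game (Y Z : 'M[C]_(dA * dB))
    (M : 'I_2 -> 'M[C]_(dA * dA)) (N : 'I_2 -> 'M[C]_(dB * dB)) :
  Defs.hermitian Y ->
  payoff (witness_game Y) M N Z = \tr ((M ord0 *t N ord0) *m joint_op Z Y).
Proof.
move=> hY; rewrite [in RHS](hermitian_product_decomposition hY).
rewrite !linear_sum /= -sum_enum_val /payoff /=; apply: eq_bigr => s _.
rewrite big_ord_recl big_ord1 /= [X in _ + X]big1 ?addr0 => [|t _]; last first.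
  by rewrite big1 // => b _; rewrite mul0r.
rewrite !linear_sum /= -[RHS]sum_enum_val; apply: eq_bigr => t _.
rewrite big_ord_recl big_ord1 /= mul0r addr0.
by rewrite /corr joint_stateE !linearZ.
Qed.
End WitnessGame.

Theorem theorem1 (C : numClosedFieldType) (dA dB : nat) (W : 'M[C]_(dA * dB)) :
  popt W -> ~ density W ->
  exists (G : sq_game C),
    valid_game G /\
    exists (M0 : 'I_(nOA G) -> 'M[C]_(dA * dAo G))
           (N0 : 'I_(nOB G) -> 'M[C]_(dB * dBo G)),
      povm M0 /\ povm N0 /\ payoff G M0 N0 W < 0 /\
      forall (rho : 'M[C]_(dA * dB))
             (M : 'I_(nOA G) -> 'M[C]_(dA * dAo G))
             (N : 'I_(nOB G) -> 'M[C]_(dB * dBo G)),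
        density rho -> povm M -> povm N -> 0 <= payoff G M N rho.
Proof.
move=> [hW [trW _]] not_density.
have /andP[dA_gt0 dB_gt0] : (0 < dA)%N && (0 < dB)%N.
  by rewrite -muln_gt0; apply: mxtrace_eq1_dim_gt0 trW.
have [x x_neg] : exists x : 'cV[C]_(dA * dB), (adjmx x *m W *m x) 0 0 < 0.
  by apply: not_psd_witness => // psdW; apply: not_density.
pose Y := adjmx x^T *m x^T.
have psdY : psd Y := psd_adjmx_mul _.
have hY : Defs.hermitian Y by case: psdY.
have YT : Y^T = x *m adjmx x by rewrite trmx_mul /adjmx !trmxK map_trmx.
exists (witness_game Y); split; first exact: witness_game_valid.
exists (fun a => if a == ord0 then max_ent_proj dA else 1%:M - max_ent_proj dA).
exists (fun b => if b == ord0 then max_ent_proj dB else 1%:M - max_ent_proj dB).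
do 2 (split; first by apply: povm_proj;
  [apply: max_ent_proj_hermitian | apply: max_ent_proj_idem]).
split=> [|rho M N [psd_rho _] [psd_M _] [psd_N _]]; rewrite payoff_witness_game //=.
  rewrite mxtrace_max_ent_joint_op YT mulmxA mxtrace_mulC mulmxA /mxtrace big_ord1.
  by rewrite pmulr_rlt0 // invr_gt0 mulr_gt0 ?ltr0n.
by apply: psd_mxtrace_mul_ge0; [apply: psd_tens | apply: psd_joint_op].
Qed.
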